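(* Consider the non-amortized variant of the algorithmic framework described below with parameters $\gamma\in(0,1)$, $\eta=\gamma^{-1}$ and $\xi=2\gamma^{-1}$. Then the framework maintains $\ell_i\le(1+\eta)T$ for every machine $i$, where $\ell_i=\sum_{j\in \hat J_i\cup\check J_i}p_j/s_i$ is the total load of machine $i$ and $T$ is the current guess.
   Context: Problem: machines $1,\dots,m$ with speeds $s_1\ge s_2\ge\dots\ge s_m>0$; jobs arrive online, job $j$ has size $p_j>0$; the load of job $j$ on machine $i$ is $p_j/s_i$. Framework (non-amortized variant): it keeps a guess $T$ and for each machine $i$ a partition of its jobs into old jobs $\hat J_i$ and new jobs $\check J_i$. Machine $i$ is saturated if $\check\ell_i:=\sum_{j\in\check J_i}p_j/s_i\ge T$, and $\eta$-eligible for job $j$ if $p_j/s_i\le \eta T$. Let $\tilde{\mathcal M}(\eta,j)$ be the set of machines that are $\eta$-eligible for $j$ and not saturated. When the first job $j_1$ arrives, set $T=p_{j_1}/s_1$ and place $j_1$ on machine 1. When a later job $j^*$ arrives, put it into a priority queue $Q$ (larger size = higher priority) and run: while $Q$ is nonempty, remove the largest job $j'$ from $Q$; then repeat: if $\tilde{\mathcal M}(\eta,j')\ne\emptyset$, choose a slowest machine $i'$ in it, move every $j\in\hat J_{i'}$ with $p_j\ge \eta^{-1}p_{j'}$ from $\hat J_{i'}$ to $\check J_{i'}$, and if $i'$ is still not saturated stop repeating; otherwise set $T:=\xi T$ and for every machine $i$ move all jobs of $\check J_i$ to $\hat J_i$. After a machine $i'$ is found, set $\pi:=\gamma p_{j'}$;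 go through the jobs $j\in\hat J_{i'}$ in non-increasing order of size and, whenever $p_j\le\pi$, set $\pi:=\pi-p_j$ and move $j$ from $\hat J_{i'}$ into $Q$ (removing it from $i'$). Finally add $j'$ to $\check J_{i'}$ (any leftover $\pi$ is discarded). *)

From HB Require Import structures.
From mathcomp Require Import all_boot all_order all_algebra.
Set Implicit Arguments. Unset Strict Implicit. Unset Printing Implicit Defensive.
Import Order.TTheory GRing.Theory Num.Theory.
Local Open Scope ring_scope.

(* Idle       : waiting (Q nonempty: about to extract the largest job;
                Q empty: waiting for the next arrival).
   Search j   : job j has been extracted from Q; inside the "repeat" loop.
   Found j i  : the loop stopped with machine i; about to remove old jobs
                of i into Q and add j to the new jobs of i. *)
Inductive phase (m : nat) := Idle | Search of nat | Found of nat & 'I_m.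

(* Jobs are natural numbers: job j is the (j+1)-st arriving job. *)
Record state (R : Type) (m : nat) := State {
  guess : R;
  oldJ : 'I_m -> seq nat;        (* \hat J_i *)
  newJ : 'I_m -> seq nat;        (* \check J_i *)
  queue : seq nat;
  arrived : nat;
  ph : phase m }.

Section Framework.
Variables (R : realFieldType) (m : nat) (hm : (0 < m)%N).
Variables (s : 'I_m -> R) (p : nat -> R) (gamma eta xi : R).

Definition machine1 : 'I_m := Ordinal hm.

Definition mload (l : seq nat) (i : 'I_m) : R := (\sum_(j <- l) p j) / s i.

Definition load (st : state R m) (i : 'I_m) : R := mload (oldJ st i ++ newJ st i) i.

Definition saturated (st : state R m) (i : 'I_m) : Prop :=
  guess st <= mload (newJ st i) i.

Definition eligible (st : state R m) (j : nat) (i : 'I_m) : Prop :=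
  p j / s i <= eta * guess st.

(* membership in \tilde M(eta, j) *)
Definition avail (st : state R m) (j : nat) (i : 'I_m) : Prop :=
  eligible st j i /\ ~ saturated st i.

(* Greedy removal: go through the list (sorted by non-increasing size);
   whenever p_j <= pi, subtract and remove.  Returns (removed, kept). *)
Fixpoint greedy (pi : R) (l : seq nat) : seq nat * seq nat :=
  match l with
  | [::] => ([::], [::])
  | j :: l' =>
      if p j <= pi then let r := greedy (pi - p j) l' in (j :: r.1, r.2)
      else let r := greedy pi l' in (r.1, j :: r.2)
  end.

Definition init_state : state R m :=
  State 0 (fun _ => [::]) (fun _ => [::]) [::] 0 (@Idle m).

(* result of moving the old jobs j of machine i with p_j >= eta^-1 p_{j'}
   into the new jobs; the phase records whether the repeat loop stops *)
Definition promote (st : state R m) (j' : nat) (i : 'I_m) : state R m :=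
  let big k := eta^-1 * p j' <= p k in
  let nw := newJ st i ++ filter big (oldJ st i) in
  State (guess st)
    (fun k => if k == i then filter (predC big) (oldJ st i) else oldJ st k)
    (fun k => if k == i then nw else newJ st k)
    (queue st) (arrived st)
    (if guess st <= mload nw i then @Search m j' else @Found m j' i).

Inductive step : state R m -> state R m -> Prop :=
  | step_first st :
      ph st = @Idle m -> queue st = [::] -> arrived st = 0%N ->
      step st (State (p 0%N / s machine1) (oldJ st)
                 (fun k => if k == machine1 then rcons (newJ st k) 0%N else newJ st k)
                 [::] 1 (@Idle m))
  | step_arrive st :
      ph st = @Idle m -> queue st = [::] -> (0 < arrived st)%N ->
      step st (State (guess st) (oldJ st) (newJ st) [:: arrived st]
                 (arrived st).+1 (@Idle m))
  | step_pop st j :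
      ph st = @Idle m -> j \in queue st ->
      (forall k, k \in queue st -> p k <= p j) ->
      step st (State (guess st) (oldJ st) (newJ st) (rem j (queue st))
                 (arrived st) (@Search m j))
  | step_select st j i :
      ph st = @Search m j -> avail st j i ->
      (forall k, avail st j k -> s i <= s k) ->
      step st (promote st j i)
  | step_raise st j :
      ph st = @Search m j -> (forall i, ~ avail st j i) ->
      step st (State (xi * guess st) (fun k => oldJ st k ++ newJ st k)
                 (fun _ => [::]) (queue st) (arrived st) (@Search m j))
  (* removal of old jobs of i (non-increasing order, ties arbitrary) with
     budget gamma * p_{j'}, and placement of j' as a new job on i *)
  | step_place st j i o :
      ph st = @Found m j i -> perm_eq o (oldJ st i) ->
      sorted (fun a b => p b <= p a) o ->
      step st (State (guess st)
                 (fun k => if k == i then (greedy (gamma * p j) o).2 else oldJ st k)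
                 (fun k => if k == i then rcons (newJ st k) j else newJ st k)
                 (queue st ++ (greedy (gamma * p j) o).1)
                 (arrived st) (@Idle m)).

Inductive reachable : state R m -> Prop :=
  | reach_init : reachable init_state
  | reach_step st st' : reachable st -> step st st' -> reachable st'.

End Framework.

(* Besides the load bound O + N <= (1 + 1/gamma) T, every machine keeps the
   weighted bound O + (gamma/2) N <= ((1 + gamma)/2) T on the load O of its old
   jobs and the load N of its new jobs.  Raising the guess by xi = 2/gamma makes
   every job old, and the first bound at the old guess is exactly the second one
   at the new guess.  Promoting old jobs to new ones only decreases the weighted
   load.  When job j is placed on machine i, that machine is unsaturated
   (N < T), eligible (p_j/s_i <= T/gamma), and all its old jobs are smaller than
   gamma p_j.  Either the greedy removal then empties the old jobs, or, as they
   are scanned by non-increasing size, it removes more than gamma p_j / 2; this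
   pays for the weight gamma/2 of j in the second bound, and through it keeps
   the first. *)

From Pilot Require Import Defs.
From HB Require Import structures.
From mathcomp Require Import all_boot all_order all_algebra.
From mathcomp Require Import lra.
Import Order.TTheory GRing.Theory Num.Theory.
Local Open Scope ring_scope.

Section Greedy.
Context {R : realFieldType} {p : nat -> R}.

Lemma greedy_perm pi l : perm_eq ((greedy p pi l).1 ++ (greedy p pi l).2) l.
Proof.
elim: l pi => [|a l IH] pi //=.
case: ifP => _ /=; first by rewrite perm_cons IH.
by rewrite -[_ :: _]cat1s perm_catCA /= perm_cons IH.
Qed.

Hypothesis p_ge0 : forall j, 0 <= p j.

Lemma greedy_budget_lt pi l k ks :
  (greedy p pi l).2 = k :: ks -> pi < \sum_(x <- (greedy p pi l).1) p x + p k.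
Proof.
elim: l pi => [|a l IH] pi //=.
case: ifP => [_ /IH | /negbT]; first by rewrite big_cons; lra.
rewrite -ltNge => lt_pi [<- _].
have : 0 <= \sum_(x <- (greedy p pi l).1) p x by exact: sumr_ge0.
lra.
Qed.

Lemma greedy_removed_gt_half pi l :
  sorted (fun a b => p b <= p a) l -> {in l, forall x, p x <= pi} ->
  (greedy p pi l).2 != [::] -> pi < 2 * \sum_(x <- (greedy p pi l).1) p x.
Proof.
case: l => [|a l] //= sorted_l le_pi.
rewrite le_pi ?mem_head //= big_cons.
case kept: (greedy p (pi - p a) l).2 => [|k ks] // _.
have /allP le_a : all (fun b => p b <= p a) l.
  apply: order_path_min sorted_l => y x z le_xy le_yz.
  exact: le_trans le_yz le_xy.
have le_ka : p k <= p a.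
  apply: le_a; rewrite -(perm_mem (greedy_perm (pi - p a) l)) mem_cat kept.
  by rewrite mem_head orbT.
have := greedy_budget_lt _ _ _ _ kept.
have : 0 <= \sum_(x <- (greedy p (pi - p a) l).1) p x by exact: sumr_ge0.
lra.
Qed.

End Greedy.

Section LoadBound.
Context {R : realFieldType} {m : nat} (hm : (0 < m)%N).
Variables (s : 'I_m -> R) (p : nat -> R) (gamma : R).
Hypotheses (gamma_gt0 : 0 < gamma) (gamma_lt1 : gamma < 1).
Hypotheses (s_gt0 : forall i, 0 < s i) (p_gt0 : forall j, 0 < p j).

Local Notation mload := (mload s p).
Local Notation reachable := (reachable hm s p gamma gamma^-1 (2 * gamma^-1)).
Local Notation step := (step hm s p gamma gamma^-1 (2 * gamma^-1)).

Lemma mload_nil i : mload [::] i = 0.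
Proof. by rewrite /mload big_nil mul0r. Qed.

Lemma mload_cat l1 l2 i : mload (l1 ++ l2) i = mload l1 i + mload l2 i.
Proof. by rewrite /mload big_cat mulrDl. Qed.

Lemma mload_seq1 j i : mload [:: j] i = p j / s i.
Proof. by rewrite /mload big_seq1. Qed.

Lemma mload_rcons l j i : mload (rcons l j) i = mload l i + p j / s i.
Proof. by rewrite -cats1 mload_cat mload_seq1. Qed.

Lemma mload_perm l1 l2 i : perm_eq l1 l2 -> mload l1 i = mload l2 i.
Proof. by move=> perm12; rewrite /mload (perm_big _ perm12). Qed.

Lemma mload_filterC (P : pred nat) l i :
  mload (filter P l) i + mload (filter (predC P) l) i = mload l i.
Proof. by rewrite /mload -mulrDl !big_filter [in RHS](bigID P). Qed.

Lemma mload_ge0 l i : 0 <= mload l i.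
Proof.
by apply: divr_ge0; [apply: sumr_ge0 => j _; exact: ltW | exact: ltW].
Qed.

Lemma mload_greedy_removed pi o i :
  sorted (fun a b => p b <= p a) o -> {in o, forall x, p x <= pi} ->
  mload (greedy p pi o).2 i = 0 \/ pi / s i < 2 * mload (greedy p pi o).1 i.
Proof.
move=> sorted_o le_pi; case kept: (greedy p pi o).2 => [|k ks].
  by left; exact: mload_nil.
right; rewrite /mload mulrA ltr_pM2r ?invr_gt0 //.
by apply: greedy_removed_gt_half; rewrite ?kept // => j; exact: ltW.
Qed.

(* [O] and [N]: loads of the old and of the new jobs of a machine;
   [T]: the guess. *)
Definition bounded_loads (O N T : R) : Prop :=
  O + N <= (1 + gamma^-1) * T /\ O + gamma / 2 * N <= (1 + gamma) / 2 * T.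

Lemma bounded_loads0 (N T : R) : 0 <= N -> N <= T -> bounded_loads 0 N T.
Proof.
move=> N_ge0 le_NT.
have T_ge0 : 0 <= T := le_trans N_ge0 le_NT.
have : 0 <= gamma^-1 * T by rewrite mulr_ge0 // invr_ge0 ltW.
have : gamma * N <= gamma * T by rewrite ler_pM2l.
by rewrite /bounded_loads; split; lra.
Qed.

Lemma bounded_loads_promote (O X N T : R) :
  0 <= X -> bounded_loads (O + X) N T -> bounded_loads O (N + X) T.
Proof.
move=> X_ge0 [le1 le2]; have : gamma * X <= X by rewrite ler_piMl // ltW.
by rewrite /bounded_loads; split; lra.
Qed.

Lemma bounded_loads_raise (O N T : R) :
  0 <= O -> 0 <= N -> bounded_loads O N T ->
  bounded_loads (O + N) 0 (2 * gamma^-1 * T).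
Proof.
move=> O_ge0 N_ge0 [le1 _].
have gammaVK : gamma * gamma^-1 = 1 by rewrite mulfV ?gt_eqF.
have gammaV_gt1 : 1 < gamma^-1 by rewrite invf_gt1.
by rewrite /bounded_loads; split; nra.
Qed.

Lemma bounded_loads_place (Q K N P T : R) :
  0 <= Q -> 0 <= P -> N < T -> P <= gamma^-1 * T ->
  K = 0 \/ gamma * P < 2 * Q ->
  bounded_loads (Q + K) N T -> bounded_loads K (N + P) T.
Proof.
move=> Q_ge0 P_ge0 lt_NT le_PT K_cases [_ le2].
have gammaVT : gamma * (gamma^-1 * T) = T by rewrite mulrA mulfV ?gt_eqF ?mul1r.
have : gamma * N <= gamma * T by rewrite ler_pM2l // ltW.
have : gamma * P <= T by rewrite -[leRHS]gammaVT ler_pM2l.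
rewrite /bounded_loads; case: K_cases => [-> | lt_P]; first by split; lra.
have weight_ge0 : 0 <= 1 - gamma / 2 by move: gamma_lt1; lra.
have : 0 <= (1 - gamma / 2) * (T - N) by rewrite mulr_ge0 // subr_ge0 ltW.
have : 0 <= (1 - gamma / 2) * (gamma^-1 * T - P) by rewrite mulr_ge0 // subr_ge0.
by split; lra.
Qed.

Definition found_spec (st : state R m) : Prop :=
  forall j i, ph st = Defs.Found j i ->
  [/\ mload (newJ st i) i < guess st, p j / s i <= gamma^-1 * guess st
    & {in oldJ st i, forall k, p k < gamma * p j}].

Definition framework_inv (st : state R m) : Prop :=
  (forall i, bounded_loads (mload (oldJ st i) i) (mload (newJ st i) i) (guess st))
  /\ found_spec st.

Lemma reachable_arrived0 st :
  reachable st -> arrived st = 0%N -> st = init_state R m.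
Proof.
elim=> [// | st0 st1 _ IH step01]; case: step01 IH => //= {}st.
- by move=> j _ j_in _ IH /IH st_init; rewrite st_init in j_in.
- by move=> j i ph_st _ _ IH /IH st_init; rewrite st_init in ph_st.
- by move=> j ph_st _ IH /IH st_init; rewrite st_init in ph_st.
- by move=> j i o ph_st _ _ IH /IH st_init; rewrite st_init in ph_st.
Qed.

Lemma step_inv st st' :
  reachable st -> framework_inv st -> step st st' -> framework_inv st'.
Proof.
move=> reach_st inv_st step_st; case: step_st reach_st inv_st => {}st.
- move=> _ _ arrived0 /reachable_arrived0 /(_ arrived0) -> _.
  have P_ge0 : 0 <= p 0 / s (machine1 hm) by rewrite divr_ge0 ?ltW.
  split=> [i | //] /=; case: eqP => [-> | _];
    by rewrite ?mload_seq1 mload_nil; apply: bounded_loads0; rewrite ?lexx.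
- by move=> _ _ _ _ [bounded _]; split.
- by move=> j _ _ _ _ [bounded _]; split.
- move=> j i _ [elig _] _ _ [bounded _]; split=> [k | j' i'] /=.
  + case: eqP => [-> | _]; last exact: bounded.
    rewrite mload_cat; apply: bounded_loads_promote; first exact: mload_ge0.
    by rewrite addrC mload_filterC; exact: bounded.
  + case: ifP => // unsat [<- <-]; split.
    * by rewrite eqxx ltNge unsat.
    * exact: elig.
    * by move=> k; rewrite eqxx mem_filter invrK /= -ltNge => /andP[].
- move=> j _ _ _ [bounded _]; split=> [k | //] /=.
  rewrite mload_nil mload_cat.
  by apply: bounded_loads_raise (bounded k); exact: mload_ge0.
- move=> j i o ph_st perm_o sorted_o _ [bounded found].
  have [lt_new le_elig small_old] := found j i ph_st.
  split=> [k | //] /=; case: eqP => [-> | _]; last exact: bounded.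
  rewrite mload_rcons.
  apply: (bounded_loads_place (mload (greedy p (gamma * p j) o).1 i)) => //.
  + exact: mload_ge0.
  + by rewrite divr_ge0 ?ltW.
  + rewrite mulrA; apply: mload_greedy_removed => // x.
    by rewrite (perm_mem perm_o) => /small_old/ltW.
  + rewrite -mload_cat (mload_perm _ _ _ (greedy_perm _ _)).
    by rewrite (mload_perm _ _ _ perm_o); exact: bounded.
Qed.

Lemma reachable_inv st : reachable st -> framework_inv st.
Proof.
elim=> [| st0 st1 reach_st0 inv_st0 step01].
  by split=> [i | //] /=; rewrite mload_nil; apply: bounded_loads0.
exact: step_inv reach_st0 inv_st0 step01.
Qed.
End LoadBound.

Arguments reachable_inv {R m hm s p gamma} gamma_gt0 gamma_lt1 s_gt0 p_gt0 {st}.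

Theorem lemma6 (R : realFieldType) (m : nat) (hm : (0 < m)%N)
  (s : 'I_m -> R) (p : nat -> R) (gamma : R) :
  0 < gamma -> gamma < 1 ->
  (forall i, 0 < s i) ->
  (forall i k : 'I_m, (i <= k)%N -> s k <= s i) ->
  (forall j, 0 < p j) ->
  forall st, reachable hm s p gamma gamma^-1 (2 * gamma^-1) st ->
  forall i, load s p st i <= (1 + gamma^-1) * guess st.
Proof.
move=> gamma_gt0 gamma_lt1 s_gt0 _ p_gt0 st reach_st i.
have [bounded _] := reachable_inv gamma_gt0 gamma_lt1 s_gt0 p_gt0 reach_st.
by rewrite /load mload_cat; exact: (bounded i).1.
Qed.
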